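(* Let $k\ge\ell\ge1$ be integers with $k+\ell\ge6$, let $G$ be a finite digraph, and let $Z\subseteq V(G)$ with $|Z|\ge 2$. Then $$\Pr[\phi\in\mathcal S\text{ and }\mathrm{Im}\,\phi\subseteq Z]\le \frac{(k-1)^{k-1}\ell^\ell}{(m-1)^{m-1}}\,\mu(Z)^2\,\frac{\delta(Z)}{2}\,\max_{z\in Z}\rho_Z(z)^{m-1}.$$
   Context: Put $m=k+\ell$. Digraphs are finite, without loops; $xy$ denotes an arc from $x$ to $y$; two vertices are adjacent if at least one of $xy,yx$ is an arc. The oriented star $S_{k,\ell}$ has a center $c$, a set $O$ of $k$ out-leaves and a set $I$ of $\ell$ in-leaves; its arcs are exactly $co$ ($o\in O$) and $ic$ ($i\in I$). For a digraph $G$ on $n$ vertices, let $\phi$ be a uniformly random map from $V(S_{k,\ell})$ to $V(G)$ (all $n^{m+1}$ maps equally likely), and let $\mathcal S$ be the set of maps $\phi$ that are isomorphisms from $S_{k,\ell}$ onto the induced subdigraph $G[\mathrm{Im}\,\phi]$ (in particular injective). For $A\subseteq V(G)$: $\mu(A)=|A|/n$, and $\rho_A(x)$ is the number of vertices of $A$ adjacent to $x$, divided by $n$. $\delta(Z)$ is the number of adjacent unordered pairs of vertices of $Z$ divided by $\binom{|Z|}{2}$. *)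

From mathcomp Require Import all_boot all_order all_algebra.
Set Implicit Arguments. Unset Strict Implicit. Unset Printing Implicit Defensive.
Import Order.TTheory GRing.Theory Num.Theory.
Local Open Scope ring_scope.

(* A digraph on a finite vertex type V is an arc relation [arc : rel V]
   (x -> y is an arc iff [arc x y]); loopless is imposed as a hypothesis. *)

Definition adj (V : finType) (arc : rel V) (x y : V) : bool := arc x y || arc y x.

Definition mu (R : realFieldType) (V : finType) (A : {set V}) : R :=
  #|A|%:R / #|V|%:R.

Definition rho (R : realFieldType) (V : finType) (arc : rel V) (A : {set V}) (x : V) : R :=
  #|[set y in A | adj arc x y]|%:R / #|V|%:R.

Definition adj_pairs (V : finType) (arc : rel V) (Z : {set V}) : nat :=
  #|[set p : V * V | [&& p.1 \in Z, p.2 \in Z, p.1 != p.2 & adj arc p.1 p.2]]| %/ 2.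

Definition delta (R : realFieldType) (V : finType) (arc : rel V) (Z : {set V}) : R :=
  (adj_pairs arc Z)%:R / ('C(#|Z|, 2))%:R.

(* The oriented star S_{k,l} on vertex set 'I_(k+l+1):
   vertex 0 is the center c, vertices 1..k are the out-leaves O,
   vertices k+1..k+l are the in-leaves I. Arcs: c o (o in O), i c (i in I). *)
Definition star_arc (k l : nat) : rel 'I_(k + l + 1) :=
  fun i j => ((val i == 0%N) && (1 <= val j <= k)%N)
          || ((k < val i)%N && (val j == 0%N)).

Definition star_iso (V : finType) (arc : rel V) (k l : nat)
    (phi : {ffun 'I_(k + l + 1) -> V}) : bool :=
  injectiveb phi &&
  [forall i, forall j, arc (phi i) (phi j) == @star_arc k l i j].

(* Pr[phi in S and Im phi \subseteq Z] for phi uniform among all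
   n^(m+1) maps V(S_{k,l}) -> V(G) *)
Definition star_prob (R : realFieldType) (V : finType) (arc : rel V) (k l : nat)
    (Z : {set V}) : R :=
  #|[set phi : {ffun 'I_(k + l + 1) -> V} |
      @star_iso V arc k l phi && [forall i, phi i \in Z]]|%:R
  / (#|V| ^ (k + l + 1))%:R.

(* max_{z in Z} rho_Z(z)^(m-1)  (values are >= 0, Z nonempty) *)
Definition max_rho_pow (R : realFieldType) (V : finType) (arc : rel V)
    (Z : {set V}) (e : nat) : R :=
  \big[Num.max/0]_(z in Z) (rho R arc Z z ^+ e).

From mathcomp Require Import all_boot all_order all_algebra ring zify.
Set Implicit Arguments. Unset Strict Implicit. Unset Printing Implicit Defensive.
Import Order.TTheory GRing.Theory Num.Theory.

(* If phi is an isomorphism of S_{k,l} onto an induced subdigraph with image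
   in Z and centre c = phi(0), every out-leaf is sent to a vertex y of Z with
   c -> y but not y -> c, and every in-leaf to a vertex with y -> c but not
   c -> y.  Hence, writing a(c), b(c) for the numbers of such vertices,
     #stars in Z  <=  sum_{c in Z} a(c)^k b(c)^l.
   By weighted AM-GM, a^k b^l = a * a^(k-1) b^l
     <= a * (k-1)^(k-1) l^l / (m-1)^(m-1) * (a + b)^(m-1),
   and a(c) + b(c) <= n rho_Z(c).  Finally sum_c a(c) counts one-way arcs in Z,
   at most one per adjacent pair, and 2 binom(|Z|,2) <= |Z|^2 turns the number
   of adjacent pairs into the density factor mu(Z)^2 delta(Z)/2. *)

Section StarCounting.
Variables (V : finType) (arc : rel V) (Z : {set V}).

(* One-way out- and in-neighbours of c inside Z: the only possible images of
   the out-leaves and in-leaves of an induced star centred at c. *)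
Definition out_nbrs (c : V) : {set V} := [set y in Z | arc c y && ~~ arc y c].
Definition in_nbrs (c : V) : {set V} := [set y in Z | arc y c && ~~ arc c y].

(* Both one-way neighbourhoods are disjoint parts of the neighbourhood of c. *)
Lemma card_out_in_nbrs c :
  #|out_nbrs c| + #|in_nbrs c| <= #|[set y in Z | adj arc c y]|.
Proof.
have disj : [disjoint out_nbrs c & in_nbrs c].
  by apply/pred0P => y; rewrite /= !inE; case: (arc c y); rewrite ?andbF.
have := (leq_card_setU (out_nbrs c) (in_nbrs c)).2.
rewrite disj => /eqP <-; apply: subset_leq_card.
apply/subsetP => y; rewrite !inE /adj.
by case: (y \in Z); case: (arc c y); case: (arc y c).
Qed.

(* Summing one-way out-degrees counts one-way arcs (x, y); the arc and its
   reversal are distinct adjacent ordered pairs, so there are at most half as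
   many one-way arcs as adjacent ordered pairs. *)
Lemma sum_card_out_nbrs : \sum_(c in Z) #|out_nbrs c| <= adj_pairs arc Z.
Proof.
pose D := [set p : V * V | [&& p.1 \in Z, p.2 \in Z, arc p.1 p.2 & ~~ arc p.2 p.1]].
pose swap (p : V * V) := (p.2, p.1).
have swapK : involutive swap by case.
have sum_D : \sum_(c in Z) #|out_nbrs c| = #|D|.
  rewrite -sum1_card; under eq_bigr do rewrite -sum1_card.
  by rewrite pair_big_dep /=; apply: eq_bigl => -[c y]; rewrite !inE.
have card_swap : #|swap @: D| = #|D| by apply/card_imset/inv_inj.
have disj : [disjoint D & swap @: D].
  apply/pred0P => -[x y]; rewrite /= !inE /=; apply/negP => /andP[].
  case/and4P=> _ _ xy _ /imsetP[[u v]]; rewrite inE => /and4P[_ _ _ nvu] [ex ey].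
  by move: nvu; rewrite -ex -ey xy.
rewrite sum_D /adj_pairs leq_divRL // muln2 -addnn -{2}card_swap.
have := (leq_card_setU D (swap @: D)).2; rewrite disj => /eqP <-.
apply/subset_leq_card/subsetP => -[x y]; rewrite !inE /= /adj.
case/orP => [|/imsetP[[u v]]]; last rewrite inE => /and4P[? ? uv vu] [-> ->].
  case/and4P=> -> -> xy yx; rewrite xy /= andbT.
  by apply: contraNneq yx => exy; move: xy; rewrite exy.
rewrite uv orbT andbT; apply/and3P; split => //.
by apply: contraNneq vu => evu; move: uv; rewrite evu.
Qed.

Variables k l : nat.

Definition star_slot (c : V) (i : 'I_(k + l + 1)) : {set V} :=
  if val i == 0%N then [set c] else if (val i <= k)%N then out_nbrs c else in_nbrs c.

Lemma prod_star_slots (a b : nat) :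
  \prod_(i < k + l + 1) (if val i == 0%N then 1 else if (val i <= k)%N then a else b)
  = a ^ k * b ^ l.
Proof.
rewrite -(big_mkord xpredT (fun i => if i == 0%N then 1 else if (i <= k)%N then a else b)).
rewrite big_ltn ?addn1 // eqxx mul1n (big_cat_nat _ (n := k.+1)) //=; last by lia.
rewrite (eq_big_nat _ _ (F2 := fun=> a)) => [|i /andP[i_gt0 i_le]]; last by
  rewrite ifF ?ifT //; lia.
rewrite [X in _ * X](eq_big_nat _ _ (F2 := fun=> b)) => [|i /andP[i_gt i_lt]]; last by
  rewrite ifF ?ifF //; lia.
by rewrite !prod_nat_const_nat subn1 subSS addKn.
Qed.

Lemma card_star_slots c :
  #|[set phi : {ffun 'I_(k + l + 1) -> V} | [forall i, phi i \in star_slot c i]]|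
  = #|out_nbrs c| ^ k * #|in_nbrs c| ^ l.
Proof.
have -> : #|[set phi : {ffun 'I_(k + l + 1) -> V} | [forall i, phi i \in star_slot c i]]|
          = #|family (fun i => mem (star_slot c i))|.
  by apply: eq_card => phi; rewrite inE; apply/forallP/familyP.
rewrite card_family foldrE big_map big_enum -prod_star_slots /=.
apply: eq_bigr => i _; rewrite /star_slot.
by case: eqP => _; [rewrite cards1 | case: ifP].
Qed.

Definition star_center : 'I_(k + l + 1) := Ordinal (ltn_addl (k + l) (ltnSn 0)).

Lemma star_iso_slots (phi : {ffun 'I_(k + l + 1) -> V}) :
  star_iso arc phi -> (forall i, phi i \in Z) ->
  forall i, phi i \in star_slot (phi star_center) i.
Proof.
case/andP=> _ /forallP iso phiZ i.
have arcE i' j : arc (phi i') (phi j) = star_arc i' j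
  by apply/eqP; exact: (forallP (iso i')).
rewrite /star_slot; case: eqP => [i0 | /eqP i_neq0].
  by rewrite (_ : i = star_center) ?set11 //; apply: val_inj.
move: i_neq0; rewrite -lt0n => i_gt0.
case: (leqP i k) => i_k; rewrite !inE phiZ !arcE /star_arc /= eqxx andbF orbF andbT.
  by rewrite i_gt0 i_k /= -leqNgt.
apply/andP; split; first exact: i_k.
by apply/negP => /andP[_ /leq_ltn_trans/(_ i_k)]; rewrite ltnn.
Qed.

(* Grouping induced stars in Z by the image of the centre. *)
Lemma card_stars_le :
  #|[set phi : {ffun 'I_(k + l + 1) -> V} | star_iso arc phi && [forall i, phi i \in Z]]|
  <= \sum_(c in Z) #|out_nbrs c| ^ k * #|in_nbrs c| ^ l.
Proof.
pose center (phi : {ffun 'I_(k + l + 1) -> V}) := phi star_center.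
rewrite -sum1_card (partition_big center (fun c => c \in Z)) /=; last first.
  by move=> phi; rewrite inE => /andP[_ /forallP]; apply.
apply: leq_sum => c _; rewrite sum1dep_card -card_star_slots.
apply/subset_leq_card/subsetP => phi.
rewrite !inE => /andP[/andP[iso /forallP phiZ] /eqP <-].
by apply/forallP; exact: star_iso_slots.
Qed.

End StarCounting.

Local Open Scope ring_scope.

Section AMGM.
Variable R : realFieldType.

Definition amgm_const (p q : nat) : R :=
  p%:R ^+ p * q%:R ^+ q / (p + q)%:R ^+ (p + q).

Lemma amgm_const_ge0 p q : 0 <= amgm_const p q.
Proof. by rewrite /amgm_const !(mulr_ge0, invr_ge0, exprn_ge0, ler0n). Qed.

Lemma mul_nat_div_le (x : R) (p : nat) : 0 <= x -> p%:R * (x / p%:R) <= x.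
Proof.
by case: p => [|p] hx; rewrite ?mul0r // mulrC divfK ?pnatr_eq0.
Qed.

Lemma div_nat_expK (x : R) (p : nat) : (x / p%:R) ^+ p * p%:R ^+ p = x ^+ p.
Proof. by case: p => [|p]; rewrite ?expr0 ?mulr1 // -exprMn divfK ?pnatr_eq0. Qed.

(* The sequence of p copies of a followed by q copies of b; AM-GM is applied
   to it with a = x/p and b = y/q. *)
Definition blocks (p q : nat) (a b : R) : 'I_(p + q) -> R :=
  fun i => if (i < p)%N then a else b.
Arguments blocks : clear implicits.

Lemma prod_blocks p q a b : \prod_i blocks p q a b i = a ^+ p * b ^+ q.
Proof.
rewrite big_split_ord (eq_bigr (fun=> a)) => [|i _]; last by rewrite /blocks /= ltn_ord.
rewrite [X in _ * X = _](eq_bigr (fun=> b)) => [|i _]; last first.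
  by rewrite /blocks /= ltnNge leq_addr.
by rewrite !prodr_const !card_ord.
Qed.

Lemma sum_blocks p q a b : \sum_i blocks p q a b i = a *+ p + b *+ q.
Proof.
rewrite big_split_ord (eq_bigr (fun=> a)) => [|i _]; last by rewrite /blocks /= ltn_ord.
rewrite [X in _ + X = _](eq_bigr (fun=> b)) => [|i _]; last first.
  by rewrite /blocks /= ltnNge leq_addr.
by rewrite !sumr_const !card_ord.
Qed.

Lemma amgm_pow (x y : R) (p q : nat) : 0 <= x -> 0 <= y ->
  x ^+ p * y ^+ q <= amgm_const p q * (x + y) ^+ (p + q).
Proof.
move=> hx hy; have [pq0 | pq_gt0] := posnP (p + q).
  move/eqP: pq0; rewrite addn_eq0 => /andP[/eqP-> /eqP->].
  by rewrite /amgm_const addn0 !expr0 invr1 !mul1r.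
set a := x / p%:R; set b := y / q%:R.
have ab_ge0 i : 0 <= blocks p q a b i by rewrite /blocks; case: ifP; rewrite divr_ge0.
have agm := (leif_AGM (A := predT) (fun i _ => ab_ge0 i)).1.
rewrite cardT size_enum_ord prod_blocks sum_blocks in agm.
have mean_le : (a *+ p + b *+ q) / (p + q)%:R <= (x + y) / (p + q)%:R.
  rewrite ler_pM2r ?invr_gt0 ?ltr0n // -[a *+ p]mulr_natl -[b *+ q]mulr_natl.
  by rewrite lerD ?mul_nat_div_le.
have {}agm : a ^+ p * b ^+ q <= ((x + y) / (p + q)%:R) ^+ (p + q).
  apply: le_trans agm (lerXn2r _ _ _ mean_le); rewrite nnegrE ?divr_ge0 //.
    by rewrite addr_ge0 // mulrn_wge0 ?divr_ge0.
  by rewrite addr_ge0.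
rewrite -(div_nat_expK x p) -(div_nat_expK y q) -/a -/b /amgm_const.
have -> : a ^+ p * p%:R ^+ p * (b ^+ q * q%:R ^+ q) =
          a ^+ p * b ^+ q * (p%:R ^+ p * q%:R ^+ q) by ring.
have -> : p%:R ^+ p * q%:R ^+ q / (p + q)%:R ^+ (p + q) * (x + y) ^+ (p + q) =
          ((x + y) / (p + q)%:R) ^+ (p + q) * (p%:R ^+ p * q%:R ^+ q).
  by rewrite expr_div_n; ring.
by apply: ler_wpM2r; rewrite ?mulr_ge0 ?exprn_ge0 ?ler0n.
Qed.

End AMGM.

Section Bounds.
Variable R : realFieldType.

Lemma star_center_bound (k l a b d : nat) : (0 < k)%N -> (a + b <= d)%N ->
  ((a ^ k * b ^ l)%:R : R) <= a%:R * (amgm_const R (k - 1) l * d%:R ^+ (k - 1 + l)).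
Proof.
move=> k_gt0 abd; rewrite natrM !natrX -{1}(subnK k_gt0) addn1 exprS -mulrA.
apply: ler_wpM2l => //; apply: le_trans (amgm_pow _ _ _ _) _; rewrite ?ler0n //.
apply: ler_wpM2l; first exact: amgm_const_ge0.
by apply: lerXn2r; rewrite ?nnegrE -?natrD ?ler0n ?ler_nat.
Qed.

(* 2 binom(z, 2) = z (z - 1) <= z^2. *)
Lemma bin2_double_le (z : nat) : ('C(z, 2) * 2 <= z * z)%N.
Proof.
rewrite bin2 muln2 halfK; apply: leq_trans (leq_subr _ _) _.
by rewrite leq_mul // leq_pred.
Qed.

Lemma adj_pairs_density (V : finType) (arc : rel V) (Z : {set V}) :
  (2 <= #|Z|)%N ->
  (adj_pairs arc Z)%:R / #|V|%:R ^+ 2 <= mu R Z ^+ 2 * (delta R arc Z / 2).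
Proof.
move=> Z_ge2; have n_gt0 : (0 < #|V|)%N by rewrite (leq_trans _ (max_card Z)) // ltnW.
have C_gt0 : (0 < 'C(#|Z|, 2))%N by rewrite bin_gt0.
set A : R := (adj_pairs arc Z)%:R; set n : R := #|V|%:R.
set z : R := #|Z|%:R; set C : R := 'C(#|Z|, 2)%:R.
have Cz : C * 2 <= z * z :> R by rewrite -(natrM _ _ 2) -natrM ler_nat bin2_double_le.
have -> : mu R Z ^+ 2 * (delta R arc Z / 2) = A / n ^+ 2 * (z * z / (C * 2)).
  by rewrite /mu /delta -/A -/n -/z; field; rewrite !pnatr_eq0 -!lt0n C_gt0 n_gt0.
rewrite ler_peMr ?divr_ge0 ?exprn_ge0 ?ler0n //.
by rewrite ler_pdivlMr ?mul1r // mulr_gt0 ?ltr0n.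
Qed.

Lemma star_prob_le (V : finType) (arc : rel V) (Z : {set V}) (k l : nat) :
  (0 < k)%N -> (0 < #|V|)%N ->
  star_prob R arc k l Z <= amgm_const R (k - 1) l * max_rho_pow R arc Z (k - 1 + l)
                           * ((adj_pairs arc Z)%:R / #|V|%:R ^+ 2).
Proof.
move=> k_gt0 V_gt0; set n : R := #|V|%:R; set e := (k - 1 + l)%N.
set C := amgm_const R (k - 1) l; set M := max_rho_pow R arc Z e.
have n_gt0 : 0 < n by rewrite ltr0n.
have n_ge0 : 0 <= n := ltW n_gt0.
have C_ge0 : 0 <= C := amgm_const_ge0 R (k - 1) l.
have M_ge0 : 0 <= M by apply: bigmax_ge_id.
have center_bound c : c \in Z ->
    ((#|out_nbrs arc Z c| ^ k * #|in_nbrs arc Z c| ^ l)%:R : R)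
    <= #|out_nbrs arc Z c|%:R * (C * n ^+ e * M).
  move=> cZ; apply: le_trans (star_center_bound l k_gt0 (card_out_in_nbrs arc Z c)) _.
  rewrite -mulrA; apply: ler_wpM2l => //; apply: ler_wpM2l => //.
  have -> : #|[set y in Z | adj arc c y]|%:R = n * rho R arc Z c.
    by rewrite /rho mulrC divfK ?gt_eqF.
  rewrite exprMn; apply: ler_wpM2l; first exact: exprn_ge0.
  exact: (le_bigmax_cond _ (fun z => rho R arc Z z ^+ e) cZ).
have sum_bound :
    ((\sum_(c in Z) #|out_nbrs arc Z c| ^ k * #|in_nbrs arc Z c| ^ l)%N%:R : R)
    <= (adj_pairs arc Z)%:R * (C * n ^+ e * M).
  rewrite natr_sum (le_trans (ler_sum _ center_bound)) // -mulr_suml.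
  apply: ler_wpM2r; first by rewrite mulr_ge0 // mulr_ge0 // exprn_ge0.
  by rewrite -natr_sum ler_nat sum_card_out_nbrs.
rewrite /star_prob natrX -/n ler_pdivrMr ?exprn_gt0 //.
apply: le_trans (le_trans _ sum_bound) _; first by rewrite ler_nat card_stars_le.
rewrite (_ : (k + l + 1 = e + 2)%N); last by rewrite /e; lia.
rewrite exprD [X in _ <= X](_ : _ = (adj_pairs arc Z)%:R * (C * n ^+ e * M)) //.
by field; rewrite gt_eqF.
Qed.

End Bounds.

Unset Implicit Arguments.

Theorem lemma4 (R : realFieldType) (k l : nat) (V : finType) (arc : rel V)
    (Z : {set V}) :
  (1 <= l)%N -> (l <= k)%N -> (6 <= k + l)%N ->
  (forall x : V, ~~ arc x x) ->
  (2 <= #|Z|)%N ->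
  star_prob R arc k l Z <=
    ((k - 1)%:R ^+ (k - 1) * l%:R ^+ l / (k + l - 1)%:R ^+ (k + l - 1))
    * mu R Z ^+ 2 * (delta R arc Z / 2) * max_rho_pow R arc Z (k + l - 1).
Proof.
move=> l_gt0 l_le_k _ _ Z_ge2.
have k_gt0 : (0 < k)%N := leq_trans l_gt0 l_le_k.
have V_gt0 : (0 < #|V|)%N by rewrite (leq_trans _ (max_card Z)) // ltnW.
rewrite (_ : (k + l - 1 = k - 1 + l)%N); last by lia.
set C := amgm_const R (k - 1) l; set M := max_rho_pow R arc Z (k - 1 + l).
apply: le_trans (star_prob_le R arc Z l k_gt0 V_gt0) _.
rewrite -/C -/M [X in _ <= X](_ : _ = C * M * (mu R Z ^+ 2 * (delta R arc Z / 2))).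
  apply: ler_wpM2l; last exact: adj_pairs_density.
  by apply: mulr_ge0; [exact: amgm_const_ge0 | exact: bigmax_ge_id].
by rewrite /C /amgm_const; ring.
Qed.
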